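(* Let $S_{r,N}$ be an atomic exponential Puiseux semiring with $r\notin\mathbb{N}$, and let $x\in S_{r,N}$. Then $x$ has a unique factorization $z_{\min}$ of minimum length, and for every $z\in\mathsf{Z}(x)$ there exist factorizations $z=z_1,z_2,\dots,z_k=z_{\min}$ in $\mathsf{Z}(x)$ such that, for each $i\in\{1,\dots,k-1\}$, $z_{i+1}$ is obtained from $z_i$ by replacing $\mathsf{n}(r)^{\delta_m}$ copies of the atom $r^{s_m}$ by $\mathsf{d}(r)^{\delta_m}$ copies of $r^{s_{m+1}}$ or vice versa (for some $m\in\mathbb{N}$), and $|z_i|-|z_{i+1}|=|\mathsf{n}(r)^{\delta_m}-\mathsf{d}(r)^{\delta_m}|$. If moreover $r>1$, then $x$ has a unique factorization $z_{\max}$ of maximum length, and for every $z\in\mathsf{Z}(x)$ there are factorizations $z=z_1,\dots,z_k=z_{\max}$ in $\mathsf{Z}(x)$, each obtained from the previous by such a replacement, with $|z_{i+1}|-|z_i|=|\mathsf{n}(r)^{\delta_m}-\mathsf{d}(r)^{\delta_m}|$ for some $m\in\mathbb{N}$ depending on $i$.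
   Context: $\mathbb{N}=\{0,1,2,\dots\}$. A numerical monoid $N$ is an additive submonoid of $\mathbb{N}$ with finite complement in $\mathbb{N}$. For $r\in\mathbb{Q}_{>0}$ write $r=\mathsf{n}(r)/\mathsf{d}(r)$ with $\mathsf{n}(r),\mathsf{d}(r)$ coprime positive integers. The exponential Puiseux semiring $S_{r,N}$ is the additive submonoid of $\mathbb{Q}_{\ge 0}$ generated by $\{r^k: k\in N\}$. Let $s_0<s_1<\cdots$ be the elements of $N$ in increasing order and $\delta_n=s_{n+1}-s_n$. For $r\notin\mathbb{N}$, $S_{r,N}$ is atomic iff $\mathsf{n}(r)>1$, and then its atoms are exactly $r^{s}$, $s\in N$; note the identity $\mathsf{n}(r)^{\delta_m}r^{s_m}=\mathsf{d}(r)^{\delta_m}r^{s_{m+1}}$. For an atomic monoid, $\mathsf{Z}(x)$ denotes the set of factorizations of $x$ (formal sums of atoms, i.e. elements of the free commutative monoid on the atoms, whose evaluation is $x$) and $|z|$ the length (number of atoms counted with multiplicity) of a factorization $z$. *)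

From HB Require Import structures.
From mathcomp Require Import all_boot all_order all_algebra.
From mathcomp Require Import finmap multiset.
Set Implicit Arguments. Unset Strict Implicit. Unset Printing Implicit Defensive.
Import Order.TTheory GRing.Theory Num.Theory.

Local Open Scope ring_scope.
Open Scope mset_scope.
Open Scope ring_scope.

Definition nr (r : rat) : nat := `|numq r|%N.
Definition dr (r : rat) : nat := `|denq r|%N.

Definition numerical_monoid (N : pred nat) : Prop :=
  N 0%N /\ (forall a b, N a -> N b -> N (a + b)%N) /\
  exists B : nat, forall n, (B <= n)%N -> N n.

(* a and b are consecutive elements of N, i.e. a = s_m and b = s_(m+1)
   for some m (then delta_m = b - a). *)
Definition consecutive (N : pred nat) (a b : nat) : Prop :=
  [/\ N a, N b, (a < b)%N & forall c, (a < c < b)%N -> ~~ N c].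

Definition in_S (r : rat) (N : pred nat) (x : rat) : Prop :=
  exists s : seq nat, all N s /\ x = \sum_(k <- s) r ^+ k.

(* The atoms of S_{r,N} (r not in N, n(r) > 1): the r^s with s in N. *)
Definition atom (r : rat) (N : pred nat) (a : rat) : Prop :=
  exists2 s, N s & a = r ^+ s.

(* z is a factorization of x: a multiset of atoms whose sum is x.
   Its length |z| is size z (number of atoms with multiplicity). *)
Definition is_fact (r : rat) (N : pred nat) (x : rat) (z : {mset rat}) : Prop :=
  (forall a, a \in z -> atom r N a) /\ \sum_(a <- z) a = x.

Definition repl_step (r : rat) (N : pred nat) (a b : nat)
    (z z' : {mset rat}) : Prop :=
  let A := msetn (nr r ^ (b - a))%N (r ^+ a) in
  let B := msetn (dr r ^ (b - a))%N (r ^+ b) in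
  consecutive N a b /\
  ((msubset A z /\ z' = msetD (msetB z A) B) \/
   (msubset B z /\ z' = msetD (msetB z B) A)).

Definition chain (r : rat) (N : pred nat) (x : rat) (dir : bool)
    (z z' : {mset rat}) : Prop :=
  exists zs : seq {mset rat},
    [/\ last z zs = z',
        (forall w, w \in zs -> is_fact r N x w) &
        forall i, (i < size zs)%N ->
          let zi := nth z (z :: zs) i in
          let zj := nth z (z :: zs) i.+1 in
          exists a b : nat,
            repl_step r N a b zi zj /\
            (if dir then (size zi)%:Z - (size zj)%:Z
                    else (size zj)%:Z - (size zi)%:Z)
            = `| (nr r ^ (b - a))%N%:Z - (dr r ^ (b - a))%N%:Z |].

From HB Require Import structures.
From mathcomp Require Import all_boot all_order all_algebra.
From mathcomp Require Import finmap multiset.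
From mathcomp Require Import zify ring.
From Stdlib Require Import Classical.
Import Order.TTheory GRing.Theory Num.Theory.
Open Scope mset_scope.
Open Scope ring_scope.

Set Implicit Arguments. Unset Strict Implicit. Unset Printing Implicit Defensive.

(* Write r = n / d in lowest terms (n > 1) and, for consecutive elements
   a < b of N, let the A-block be n ^ (b - a) copies of r ^ a and the
   B-block d ^ (b - a) copies of r ^ b.  Both blocks have the same sum, so
   trading one for the other inside a factorization is a replacement step;
   it changes the length by |n ^ (b - a) - d ^ (b - a)| > 0.

   1. Uniqueness.  Clearing denominators turns a factorization of x with
      exponent counts c into the number  sum_s c s * n ^ s * d ^ (E - s).
      A digit argument (weighted_sum_inj) shows that counts with "n-gaps"
      are determined by this number.  A factorization without A-blocks has
      n-gaps; one without B-blocks has d-gaps once exponents are reversed.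
      So x has at most one A-reduced and at most one B-reduced factorization.
   2. Descent.  A non-reduced factorization admits a step decreasing a
      measure; iterating gives a chain to a reduced one, the same for every
      starting point by uniqueness (extremal_fact).
   3. Lengths.  Steps move the length monotonically, so the common endpoint
      is the unique factorization of extremal length: for the minimum reduce
      the longer block (A if r > 1, B if r < 1); for the maximum (r > 1)
      reduce B, the descent being bounded since every length is at most x. *)

Definition weighted_sum (p q E : nat) (c : nat -> nat) : nat :=
  \sum_(0 <= s < E.+1) c s * (p ^ s * q ^ (E - s)).

Lemma weighted_sum_rev p q E c :
  weighted_sum p q E c = weighted_sum q p E (fun s => c (E - s)%N).
Proof.
rewrite /weighted_sum big_nat_rev; apply: eq_big_nat => s /andP[_ sE].
by rewrite add0n subSS subKn // [(q ^ s * _)%N]mulnC.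
Qed.

Definition p_gaps (p E : nat) (c1 c2 : nat -> nat) : Prop :=
  forall a f, (a < f <= E)%N -> (0 < c1 a + c2 a)%N -> (0 < c1 f + c2 f)%N ->
  exists g, [/\ (0 < g)%N, (c1 a < p ^ g)%N, (c2 a < p ^ g)%N &
    forall h, (a < h < a + g)%N -> (h <= E)%N -> (c1 h + c2 h = 0)%N].

Lemma dvdn_subn_of_eq (m X Y R1 R2 : nat) :
  (X + R1 = Y + R2 -> m %| R1 -> m %| R2 -> m %| Y - X)%N.
Proof.
move=> E h1 h2; case: (leqP X Y) => hXY; last first.
  by have -> : (Y - X = 0)%N by apply/eqP; rewrite subn_eq0 ltnW.
have HR : R1 = (Y - X + R2)%N by lia.
by rewrite HR dvdn_addl in h1.
Qed.

Section Digits.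

Variables (p q E : nat).
Hypotheses (p_gt0 : (0 < p)%N) (q_gt0 : (0 < q)%N) (coprime_pq : coprime p q).

Let w (s : nat) : nat := (p ^ s * q ^ (E - s))%N.

Lemma tail_dvd (c : nat -> nat) a g :
  (forall h, (a < h < a + g)%N -> (h <= E)%N -> c h = 0%N) ->
  (p ^ (a + g) %| \sum_(a.+1 <= s < E.+1) c s * w s)%N.
Proof.
move=> hc; rewrite big_nat_cond; apply: dvdn_sum => s /andP[/andP[s1 s2] _].
case: (ltnP s (a + g)) => sg; first by rewrite hc ?mul0n ?dvdn0 // ?s1 ?sg // -ltnS.
by apply: dvdn_mull; rewrite /w; apply: dvdn_mulr; rewrite dvdn_exp2l.
Qed.

Lemma tail_vanish (c : nat -> nat) a :
  (forall h, (a < h <= E)%N -> c h = 0%N) ->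
  (\sum_(a.+1 <= s < E.+1) c s * w s = 0)%N.
Proof.
move=> hc; rewrite big_nat_cond big1 // => s /andP[/andP[s1 s2] _].
by rewrite hc ?mul0n // s1 -ltnS.
Qed.

Lemma weight_dvd_small k a g :
  (p ^ (a + g) %| k * w a)%N -> (k < p ^ g)%N -> k = 0%N.
Proof.
move=> dk kl; case: k dk kl => // k dk kl; exfalso.
move: dk; rewrite /w expnD mulnCA dvdn_pmul2l ?expn_gt0 ?p_gt0 //.
rewrite mulnC Gauss_dvdr ?coprimeXl ?coprimeXr // => /(dvdn_leq (ltn0Sn k)).
by rewrite leqNgt kl.
Qed.

Lemma weighted_sum_split (c : nat -> nat) a : (a <= E)%N ->
  weighted_sum p q E c =
  (\sum_(0 <= s < a) c s * w s + (c a * w a + \sum_(a.+1 <= s < E.+1) c s * w s))%N.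
Proof.
move=> aE; rewrite /weighted_sum (@big_cat_nat _ _ _ a 0 E.+1) ?leq0n ?ltnS ?leqW //.
by rewrite (@big_ltn _ _ _ a E.+1) ?ltnS.
Qed.

(* At the least index a where they differ the
   lower parts cancel; if both have support past a, the tails are divisible
   by p ^ (a + g), forcing the (small) counts at a to coincide. *)
Lemma weighted_sum_inj (c1 c2 : nat -> nat) :
  weighted_sum p q E c1 = weighted_sum p q E c2 -> p_gaps p E c1 c2 ->
  forall s, (s <= E)%N -> c1 s = c2 s.
Proof.
move=> Heq gaps s0 s0E; apply/eqP; apply: contraT => ne0.
have exP : exists s, (s <= E)%N && (c1 s != c2 s) by exists s0; rewrite s0E.
case: (ex_minnP exP) => a /andP[aE nea] amin.
have low : (\sum_(0 <= s < a) c1 s * w s = \sum_(0 <= s < a) c2 s * w s)%N.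
  apply: eq_big_nat => s /andP[_ sa]; congr (_ * _)%N; apply/eqP.
  apply: contraT => ne; have := amin s; rewrite ne andbT (leq_trans (ltnW sa) aE).
  by move=> /(_ isT); rewrite leqNgt sa.
rewrite !(weighted_sum_split _ aE) low in Heq; move/addnI: Heq => Heq.
suff : c1 a = c2 a by move/eqP; rewrite (negbTE nea).
case: (classic (exists f, (a < f <= E)%N /\ (0 < c1 f + c2 f)%N)) => [[f [af pf]] | nf].
- have pa : (0 < c1 a + c2 a)%N.
    rewrite addn_gt0 !lt0n; apply: contraTT nea.
    by rewrite negb_or !negbK => /andP[/eqP-> /eqP->].
  have [g [g0 g1 g2 gh]] := gaps a f af pa pf.
  have d1 : (p ^ (a + g) %| \sum_(a.+1 <= s < E.+1) c1 s * w s)%N.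
    by apply: tail_dvd => h ha hE; have := gh h ha hE; lia.
  have d2 : (p ^ (a + g) %| \sum_(a.+1 <= s < E.+1) c2 s * w s)%N.
    by apply: tail_dvd => h ha hE; have := gh h ha hE; lia.
  have e1 := dvdn_subn_of_eq Heq d1 d2; have e2 := dvdn_subn_of_eq (esym Heq) d2 d1.
  rewrite -mulnBl in e1; rewrite -mulnBl in e2.
  have k1 := weight_dvd_small e1 (leq_ltn_trans (leq_subr _ _) g2).
  have k2 := weight_dvd_small e2 (leq_ltn_trans (leq_subr _ _) g1).
  by apply/eqP; rewrite eqn_leq -!subn_eq0 k1 k2.
- have hz h : (a < h <= E)%N -> (c1 h + c2 h = 0)%N.
    move=> hh; apply/eqP; rewrite -leqn0 leqNgt; apply/negP => hp.
    by apply: nf; exists h.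
  rewrite !tail_vanish ?addn0 in Heq; last 2 first.
  + by move=> h /hz; lia.
  + by move=> h /hz; lia.
  by apply/eqP; rewrite -(eqn_pmul2r (_ : 0 < w a)%N) ?Heq // muln_gt0 !expn_gt0 p_gt0 q_gt0.
Qed.

End Digits.

Section MultisetSums.

Variable V : nmodType.
Implicit Types (A B : {mset V}) (t : V).

Lemma sum_msetn k t : \sum_(a <- msetn k t) a = t *+ k.
Proof. by rewrite enum_msetn big_nseq iter_addr_0. Qed.

Lemma size_msetn k t : size (msetn k t) = k.
Proof. by rewrite enum_msetn size_nseq. Qed.

Lemma perm_msetD A B : perm_eq (msetD A B) ((A : seq V) ++ B).
Proof. by apply/allP => a _ /=; rewrite count_cat !count_mem_mset msetE2. Qed.

Lemma sum_msetD A B :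
  \sum_(a <- msetD A B) a = \sum_(a <- A) a + \sum_(a <- B) a.
Proof. by rewrite (perm_big _ (perm_msetD A B)) big_cat. Qed.

Lemma size_msetD A B : size (msetD A B) = (size A + size B)%N.
Proof. by rewrite (perm_size (perm_msetD A B)) size_cat. Qed.

Lemma msubset_msetn k t A : msubset (msetn k t) A = (k <= A t)%N.
Proof.
apply/msubsetP/idP => [H | h u]; first by have := H t; rewrite msetnxx.
by rewrite msetnE; case: eqP => [->|].
Qed.

Lemma exchange_sum_size A (X Y : {mset V}) : msubset X A ->
  \sum_(a <- X) a = \sum_(a <- Y) a ->
  \sum_(a <- msetD (msetB A X) Y) a = \sum_(a <- A) a /\
  (size (msetD (msetB A X) Y) + size X = size A + size Y)%N.
Proof.
move=> sub sXY; have AE : A = msetD (msetB A X) X by rewrite msetBDK.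
split; first by rewrite [in RHS]AE !sum_msetD sXY.
by rewrite [in RHS]AE !size_msetD addnAC.
Qed.

End MultisetSums.

Section NumDen.

Variable r : rat.
Hypothesis r_gt0 : 0 < r.

Lemma nr_gt0 : (0 < nr r)%N.
Proof. by rewrite /nr absz_gt0; apply: lt0r_neq0; rewrite numq_gt0. Qed.

Lemma dr_gt0 : (0 < dr r)%N.
Proof. by rewrite /dr absz_gt0 denq_neq0. Qed.

Lemma coprime_nr_dr : coprime (nr r) (dr r).
Proof. exact: coprime_num_den. Qed.

Lemma nr_div_dr : r = (nr r)%:R / (dr r)%:R.
Proof.
have n0 : 0 <= numq r by rewrite ltW // numq_gt0.
rewrite -[LHS]divq_num_den /nr /dr.
by rewrite !natr_absz !ger0_norm // ltW // denq_gt0.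
Qed.

Lemma dr_neq0 : (dr r)%:R != 0 :> rat.
Proof. by rewrite pnatr_eq0 -lt0n dr_gt0. Qed.

Lemma gt1_nr_dr : (1 < r) = (dr r < nr r)%N.
Proof.
rewrite {1}nr_div_dr ltr_pdivlMr ?mul1r ?ltr_nat //.
by rewrite ltr0n dr_gt0.
Qed.

Lemma lt1_nr_dr : (r < 1) = (nr r < dr r)%N.
Proof.
rewrite {1}nr_div_dr ltr_pdivrMr ?mul1r ?ltr_nat //.
by rewrite ltr0n dr_gt0.
Qed.

Lemma weighted_sum_powers E (c : nat -> nat) :
  (\sum_(0 <= s < E.+1) (c s)%:R * r ^+ s) * (dr r ^ E)%:R =
  (weighted_sum (nr r) (dr r) E c)%:R.
Proof.
rewrite natr_sum mulr_suml; apply: eq_big_nat => s /andP[_ sE].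
rewrite {1}nr_div_dr -(subnK (sE : (s <= E)%N)) addnC.
rewrite !natrM !natrX addKn exprD expr_div_n.
by field; rewrite expf_neq0 // dr_neq0.
Qed.

Lemma expn_nr_neq_dr k : (1 < nr r)%N -> (0 < k)%N -> (nr r ^ k != dr r ^ k)%N.
Proof.
move=> n1 k0; apply/eqP => e.
have := coprimeXl k (coprimeXr k coprime_nr_dr); rewrite -e /coprime gcdnn.
by move/eqP=> h; have := ltn_exp2l 0 k n1; rewrite h expn0 k0.
Qed.

End NumDen.

Section Factorizations.

Variables (r : rat) (N : pred nat).
Hypotheses (r_gt0 : 0 < r) (r_neq1 : r != 1).

Let exp_inj : injective (GRing.exp r) := ieexprIn r_gt0 r_neq1.

Lemma fact_of_in_S x : in_S r N x -> exists z, is_fact r N x z.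
Proof.
case=> s [alls ->]; exists (seq_mset [seq r ^+ k | k <- s]); split.
  move=> a; rewrite (perm_mem (perm_eq_seq_mset _)) => /mapP [k ks ->].
  by exists k => //; apply: (allP alls).
by rewrite (perm_big _ (perm_eq_seq_mset _)) big_map.
Qed.

Lemma exponent_bound (s : seq rat) :
  (forall a, a \in s -> atom r N a) ->
  exists E, forall a, a \in s -> exists2 k, (k <= E)%N & a = r ^+ k.
Proof.
elim: s => [|b s IH] H; first by exists 0%N.
have [E HE] := IH (fun a h => H a (mem_behead (h : a \in behead (b :: s)))).
have [k _ ->] := H b (mem_head _ _).
exists (maxn E k) => a; rewrite in_cons => /orP[/eqP ->|/HE [j jE ->]].
  by exists k; rewrite ?leq_maxr.
by exists j; rewrite ?(leq_trans jE (leq_maxl _ _)).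
Qed.

Lemma sum_count_mem (s : seq rat) t :
  \sum_(a <- s | a == t) a = (count_mem t s)%:R * t.
Proof.
elim: s => [|b s IH]; first by rewrite big_nil mul0r.
rewrite big_cons IH /=; case: eqP => [->|_]; last by rewrite add0n.
by rewrite natrD mulrDl mul1r.
Qed.

Lemma sum_by_exponent (z : {mset rat}) E :
  (forall a, a \in z -> exists2 k, (k <= E)%N & a = r ^+ k) ->
  \sum_(a <- z) a = \sum_(0 <= s < E.+1) (z (r ^+ s))%:R * r ^+ s.
Proof.
move=> H.
transitivity (\sum_(a <- z) \sum_(0 <= s < E.+1) (if a == r ^+ s then a else 0)).
  rewrite big_seq_cond [RHS]big_seq_cond; apply: eq_bigr => a /andP[az _].
  have [k kE ->] := H a az; rewrite -big_mkcond /=.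
  rewrite (eq_bigl (pred1 k)); last by move=> s; rewrite /= (inj_eq exp_inj) eq_sym.
  rewrite -big_filter filter_pred1_uniq ?big_seq1 ?iota_uniq //.
  by rewrite mem_index_iota ltnS kE.
rewrite exchange_big; apply: eq_bigr => s _.
by rewrite -big_mkcond sum_count_mem count_mem_mset.
Qed.

Lemma fact_weighted_sum_eq x z1 z2 :
  is_fact r N x z1 -> is_fact r N x z2 ->
  exists E,
   weighted_sum (nr r) (dr r) E (fun s => z1 (r ^+ s)) =
   weighted_sum (nr r) (dr r) E (fun s => z2 (r ^+ s)) /\
   ((forall k, (k <= E)%N -> z1 (r ^+ k) = z2 (r ^+ k)) -> z1 = z2).
Proof.
move=> [at1 sum1] [at2 sum2].
have hat a : a \in (z1 : seq rat) ++ z2 -> atom r N a.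
  by rewrite mem_cat => /orP[/at1|/at2].
have [E HE] := exponent_bound hat.
have b1 a : a \in z1 -> exists2 k, (k <= E)%N & a = r ^+ k.
  by move=> h; apply: HE; rewrite mem_cat h.
have b2 a : a \in z2 -> exists2 k, (k <= E)%N & a = r ^+ k.
  by move=> h; apply: HE; rewrite mem_cat h orbT.
exists E; split.
  apply/eqP; rewrite -(eqr_nat rat) -!weighted_sum_powers //.
  by rewrite -(sum_by_exponent b1) -(sum_by_exponent b2) sum1 sum2.
move=> H; apply/msetP => t.
case: (boolP (t \in (z1 : seq rat) ++ z2)) => [/HE [k kE ->] | ]; first exact: H.
rewrite mem_cat negb_or => /andP[n1 n2].
by rewrite (mset_eq0P (n1 : t \notin z1)) (mset_eq0P (n2 : t \notin z2)).
Qed.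

Lemma fact_exponent_in_N x z a : is_fact r N x z -> (0 < z (r ^+ a))%N -> N a.
Proof. by move=> [hat _]; rewrite mset_gt0 => /hat [s Ns /exp_inj ->]. Qed.

Lemma fact_count_notin_N x z h : is_fact r N x z -> ~~ N h -> z (r ^+ h) = 0%N.
Proof.
move=> fz nh; apply/eqP; rewrite -leqn0 leqNgt; apply/negP.
by move/(fact_exponent_in_N fz); rewrite (negbTE nh).
Qed.

End Factorizations.

Definition blockA (r : rat) (a b : nat) : {mset rat} :=
  msetn (nr r ^ (b - a))%N (r ^+ a).
Definition blockB (r : rat) (a b : nat) : {mset rat} :=
  msetn (dr r ^ (b - a))%N (r ^+ b).

Definition reducedA (r : rat) (N : pred nat) (z : {mset rat}) : Prop :=
  forall a b, consecutive N a b -> ~ msubset (blockA r a b) z.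
Definition reducedB (r : rat) (N : pred nat) (z : {mset rat}) : Prop :=
  forall a b, consecutive N a b -> ~ msubset (blockB r a b) z.

Lemma sum_blockA_blockB r a b : 0 < r -> (a <= b)%N ->
  \sum_(t <- blockA r a b) t = \sum_(t <- blockB r a b) t.
Proof.
move=> r0 ab; rewrite !sum_msetn -[r ^+ a *+ _]mulr_natl -[r ^+ b *+ _]mulr_natl.
have rd : r * (dr r)%:R = (nr r)%:R by rewrite {1}(nr_div_dr r0) divfK ?dr_neq0.
have -> : r ^+ b = r ^+ a * r ^+ (b - a) by rewrite -exprD subnKC.
by rewrite !natrX -rd exprMn; ring.
Qed.

Lemma next_in_N (N : pred nat) a f : N a -> N f -> (a < f)%N ->
  exists b, consecutive N a b.
Proof.
move=> Na Nf af; have exP : exists y, (a < y)%N && N y by exists f; rewrite af Nf.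
case: (ex_minnP exP) => b /andP[ab Nb] bmin; exists b.
split => // c /andP[ac cb]; apply/negP => Nc.
by have := bmin c; rewrite ac Nc => /(_ isT); rewrite leqNgt cb.
Qed.

Lemma prev_in_N (N : pred nat) b f : N b -> N f -> (f < b)%N ->
  exists a, consecutive N a b.
Proof.
move=> Nb Nf fb; have exP : exists y, (y < b)%N && N y by exists f; rewrite fb.
have ubP y : (y < b)%N && N y -> (y <= b)%N by case/andP => /ltnW.
case: (ex_maxnP exP ubP) => a /andP[ab Na] amax; exists a.
split => // c /andP[ac cb]; apply/negP => Nc.
by have := amax c; rewrite cb Nc => /(_ isT); rewrite leqNgt ac.
Qed.

Section ReducedUnique.

Variables (r : rat) (N : pred nat).
Hypotheses (r_gt0 : 0 < r) (r_neq1 : r != 1).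

Lemma reducedA_count z a b : reducedA r N z -> consecutive N a b ->
  (z (r ^+ a) < nr r ^ (b - a))%N.
Proof. by move=> red cab; rewrite ltnNge -msubset_msetn; apply/negP; exact: red. Qed.

Lemma reducedB_count z a b : reducedB r N z -> consecutive N a b ->
  (z (r ^+ b) < dr r ^ (b - a))%N.
Proof. by move=> red cab; rewrite ltnNge -msubset_msetn; apply/negP; exact: red. Qed.

(* An A-reduced factorization is its own n-adic expansion: counts at
   consecutive exponents a < b of N are below n ^ (b - a).  Hence it is
   unique. *)
Lemma reducedA_unique x z1 z2 :
  is_fact r N x z1 -> is_fact r N x z2 ->
  reducedA r N z1 -> reducedA r N z2 -> z1 = z2.
Proof.
move=> f1 f2 red1 red2.
have [E [Heq ext]] := fact_weighted_sum_eq r_gt0 r_neq1 f1 f2; apply: ext.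
apply: (weighted_sum_inj (nr_gt0 r_gt0) (dr_gt0 r) (coprime_nr_dr r) Heq).
have inN := @fact_exponent_in_N r N r_gt0 r_neq1 x.
move=> a f /andP[af _] pa pf.
have Na : N a by move: pa; rewrite addn_gt0 => /orP[/inN->|/inN->].
have Nf : N f by move: pf; rewrite addn_gt0 => /orP[/inN->|/inN->].
have [b cab] := next_in_N Na Nf af; have [_ _ ab gap] := cab.
exists (b - a)%N; split; rewrite ?subn_gt0 ?reducedA_count //.
move=> h /andP[ah hb] _; rewrite (subnKC (ltnW ab)) in hb.
have nh : ~~ N h by apply: gap; rewrite ah hb.
by rewrite (fact_count_notin_N r_gt0 r_neq1 f1 nh) (fact_count_notin_N r_gt0 r_neq1 f2 nh).
Qed.

(* Symmetrically, a B-reduced factorization read from the top exponent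
   down is a d-adic expansion, hence unique. *)
Lemma reducedB_unique x z1 z2 :
  is_fact r N x z1 -> is_fact r N x z2 ->
  reducedB r N z1 -> reducedB r N z2 -> z1 = z2.
Proof.
move=> f1 f2 red1 red2.
have [E [Heq ext]] := fact_weighted_sum_eq r_gt0 r_neq1 f1 f2; apply: ext.
rewrite !(weighted_sum_rev (nr r)) in Heq.
have := weighted_sum_inj (dr_gt0 r) (nr_gt0 r_gt0) _ Heq.
rewrite coprime_sym coprime_nr_dr => /(_ isT) rev_eq k kE.
rewrite -(subKn kE); apply: rev_eq; last exact: leq_subr.
have inN := @fact_exponent_in_N r N r_gt0 r_neq1 x.
move=> a f /andP[af fE] pa pf.
have Nb : N (E - a)%N by move: pa; rewrite addn_gt0 => /orP[/inN->|/inN->].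
have Nf : N (E - f)%N by move: pf; rewrite addn_gt0 => /orP[/inN->|/inN->].
have fa : (E - f < E - a)%N by lia.
have [a' ca'b] := prev_in_N Nb Nf fa.
have [_ _ a'b gap] := ca'b.
exists (E - a - a')%N; split; rewrite ?subn_gt0 ?reducedB_count //.
move=> h /andP[ah hb] hE.
have nh : ~~ N (E - h)%N by apply: gap; apply/andP; split; lia.
by rewrite /= (fact_count_notin_N r_gt0 r_neq1 f1 nh) (fact_count_notin_N r_gt0 r_neq1 f2 nh).
Qed.

End ReducedUnique.

Section Exchange.

Variables (r : rat) (N : pred nat).
Hypothesis r_gt0 : 0 < r.

Lemma exchange_fact x z (X Y : {mset rat}) :
  is_fact r N x z -> msubset X z -> \sum_(a <- X) a = \sum_(a <- Y) a ->
  (forall a, a \in Y -> atom r N a) ->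
  is_fact r N x (msetD (msetB z X) Y) /\
  (size (msetD (msetB z X) Y) + size X = size z + size Y)%N.
Proof.
move=> [hat hsum] sub sXY hY; have [sumE sizeE] := exchange_sum_size sub sXY.
split => //; split; last by rewrite sumE.
move=> a; rewrite in_msetD => /orP[h|]; last exact: hY.
by apply: hat; apply: (msubset_subset (msubsetDl z X)).
Qed.

Lemma atom_msetn k s : N s -> forall t, t \in msetn k (r ^+ s) -> atom r N t.
Proof. by move=> Ns t /msetnP [_ ->]; exists s. Qed.

Lemma reducedA_or_exchange x z : is_fact r N x z ->
  reducedA r N z \/ exists a b z', [/\ repl_step r N a b z z', is_fact r N x z' &
    (size z' + nr r ^ (b - a) = size z + dr r ^ (b - a))%N].
Proof.
move=> fz.
case: (classic (exists a b, consecutive N a b /\ msubset (blockA r a b) z)) =>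
  [[a [b [cab sub]]] | nex]; last by left => a b cab sub; apply: nex; exists a, b.
have [_ Nb ab _] := cab.
have [fz' sz] := exchange_fact fz sub (sum_blockA_blockB r_gt0 (ltnW ab)) (atom_msetn Nb).
rewrite !size_msetn in sz.
by right; exists a, b, (msetD (msetB z (blockA r a b)) (blockB r a b)); split => //; split => //; left.
Qed.

Lemma reducedB_or_exchange x z : is_fact r N x z ->
  reducedB r N z \/ exists a b z', [/\ repl_step r N a b z z', is_fact r N x z' &
    (size z' + dr r ^ (b - a) = size z + nr r ^ (b - a))%N].
Proof.
move=> fz.
case: (classic (exists a b, consecutive N a b /\ msubset (blockB r a b) z)) =>
  [[a [b [cab sub]]] | nex]; last by left => a b cab sub; apply: nex; exists a, b.
have [Na _ ab _] := cab.
have [fz' sz] := exchange_fact fz sub (esym (sum_blockA_blockB r_gt0 (ltnW ab))) (atom_msetn Na).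
rewrite !size_msetn in sz.
by right; exists a, b, (msetD (msetB z (blockB r a b)) (blockA r a b)); split => //; split => //; right.
Qed.

End Exchange.

Definition step (r : rat) (N : pred nat) (dir : bool) (z z' : {mset rat}) : Prop :=
  exists a b, repl_step r N a b z z' /\
  (if dir then (size z)%:Z - (size z')%:Z else (size z')%:Z - (size z)%:Z)
    = `| (nr r ^ (b - a))%N%:Z - (dr r ^ (b - a))%N%:Z |.

Section Chains.

Variables (r : rat) (N : pred nat) (x : rat).

Lemma step_of_exchange dir a b z z' : repl_step r N a b z z' ->
  (size z' + nr r ^ (b - a) = size z + dr r ^ (b - a) \/
   size z' + dr r ^ (b - a) = size z + nr r ^ (b - a))%N ->
  (if dir then size z' < size z else size z < size z')%N -> step r N dir z z'.
Proof.
move=> rs sz lt; exists a, b; split => //; move: sz.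
move: (nr r ^ (b - a))%N (dr r ^ (b - a))%N => u v sz.
case: (leqP u v) => uv; [rewrite distrC|];
  by rewrite ger0_norm ?subr_ge0 ?lez_nat ?(ltnW uv) //; case: dir lt; lia.
Qed.

Lemma chain_to_reduced dir (P : {mset rat} -> Prop) (mu : {mset rat} -> nat) :
  (forall z, is_fact r N x z -> P z \/
     exists z', [/\ step r N dir z z', is_fact r N x z' & (mu z' < mu z)%N]) ->
  forall z, is_fact r N x z ->
  exists z', [/\ P z', is_fact r N x z' & chain r N x dir z z'].
Proof.
move=> H z; have [k] := ubnP (mu z); elim: k z => // k IH z Hk fz.
case: (H z fz) => [Pz | [z' [st fz' lt]]].
  by exists z; split => //; exists [::]; split.
have [z'' [Pz'' fz'' [zs [Hl Hm Hs]]]] := IH z' (leq_trans lt (Hk : (mu z <= k)%N)) fz'.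
exists z''; split => //; exists (z' :: zs); split => //.
  by move=> w; rewrite in_cons => /orP[/eqP->|]; [exact: fz' | exact: Hm].
case=> [|i] Hi; first exact: st.
have := Hs i Hi; cbv zeta.
by rewrite [nth z _ i.+1](set_nth_default z') ?[nth z _ i.+2](set_nth_default z') //= ltnS ltnW.
Qed.

(* Since n ^ delta != d ^ delta, each step strictly moves the length in
   direction dir; so a chain is monotone in length, and trivial when the
   endpoints have the same length. *)
Lemma chain_size dir z z' : (1 < nr r)%N -> chain r N x dir z z' ->
  (if dir then (size z' <= size z)%N else (size z <= size z')%N) /\
  (size z = size z' -> z = z').
Proof.
move=> n1 [zs [Hl Hm Hs]].
have key k : (k <= size zs)%N ->
   if dir then (size (nth z (z :: zs) k))%:Z + k%:Z <= (size z)%:Z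
   else (size z)%:Z + k%:Z <= (size (nth z (z :: zs) k))%:Z.
  elim: k => [|k IH] hk; first by destruct dir; rewrite addr0.
  have := Hs k hk; cbv zeta => -[a [b [[[_ _ ab _] _] e]]].
  have pos : 0 < `| (nr r ^ (b - a))%N%:Z - (dr r ^ (b - a))%N%:Z |.
    by rewrite normr_gt0 subr_eq0 eqz_nat expn_nr_neq_dr // subn_gt0.
  by have := IH (ltnW hk); destruct dir; lia.
have := key (size zs) (leqnn _); rewrite -last_nth Hl => hz.
split; first by destruct dir; lia.
move=> e; have zs0 : size zs = 0%N by destruct dir; lia.
by move: Hl; rewrite (size0nil zs0).
Qed.

(* The abstract form of the theorem: descent towards a property P that at
   most one factorization satisfies produces the unique factorization of
   extremal length, reachable from every factorization by a chain. *)
Lemma extremal_fact dir (P : {mset rat} -> Prop) (mu : {mset rat} -> nat) :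
  (1 < nr r)%N -> (exists z0, is_fact r N x z0) ->
  (forall z, is_fact r N x z -> P z \/
     exists z', [/\ step r N dir z z', is_fact r N x z' & (mu z' < mu z)%N]) ->
  (forall z1 z2, is_fact r N x z1 -> is_fact r N x z2 -> P z1 -> P z2 -> z1 = z2) ->
  exists zm, [/\ is_fact r N x zm,
    (forall z, is_fact r N x z ->
       if dir then (size zm <= size z)%N else (size z <= size zm)%N),
    (forall z, is_fact r N x z -> size z = size zm -> z = zm) &
    (forall z, is_fact r N x z -> chain r N x dir z zm)].
Proof.
move=> n1 [z0 f0] H U.
have [zm [Pm fm _]] := chain_to_reduced H f0.
have ch z : is_fact r N x z -> chain r N x dir z zm.
  move=> fz; have [z' [Pz' fz' c]] := chain_to_reduced H fz.
  by rewrite -(U _ _ fz' fm Pz' Pm).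
exists zm; split => // z fz; have [? ?] := chain_size n1 (ch z fz) => //.
Qed.

End Chains.

Lemma exchange_shortens (p q a b m m' : nat) : (a < b)%N -> (p < q)%N ->
  (m' + q ^ (b - a) = m + p ^ (b - a))%N -> (m' < m)%N.
Proof.
move=> ab pq e; have : (p ^ (b - a) < q ^ (b - a))%N by rewrite ltn_exp2r ?subn_gt0.
by lia.
Qed.

(* For r > 1 every atom is at least 1, so lengths are bounded by x. *)
Lemma fact_size_le (r : rat) (N : pred nat) x z : 1 < r -> is_fact r N x z ->
  (size z)%:R <= x.
Proof.
move=> r1 [hat <-].
rewrite -sum1_size natr_sum big_seq [X in _ <= X]big_seq; apply: ler_sum => a az.
by have [s _ ->] := hat a az; apply: exprn_ege1; rewrite ltW.
Qed.

Unset Implicit Arguments.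

(* Minimum length: reduce A-blocks if r > 1 (they are the longer side) and
   B-blocks if r < 1.  Maximum length for r > 1: reduce B-blocks, using the
   bound |z| <= x for the descent. *)
Theorem mainTheorem2 (r : rat) (N : pred nat) (x : rat) :
  numerical_monoid N ->
  0 < r ->
  (forall n : nat, r != n%:R) ->
  (1 < nr r)%N ->
  in_S r N x ->
  (exists zmin : {mset rat},
     [/\ is_fact r N x zmin,
         (forall z, is_fact r N x z -> (size zmin <= size z)%N),
         (forall z, is_fact r N x z -> size z = size zmin -> z = zmin) &
         (forall z, is_fact r N x z -> chain r N x true z zmin)]) /\
  (1 < r ->
   exists zmax : {mset rat},
     [/\ is_fact r N x zmax,
         (forall z, is_fact r N x z -> (size z <= size zmax)%N),
         (forall z, is_fact r N x z -> size z = size zmax -> z = zmax) &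
         (forall z, is_fact r N x z -> chain r N x false z zmax)]).
Proof.
move=> _ r0 r_notN n1 xS; have r1 : r != 1 := r_notN 1%N.
have ex0 := fact_of_in_S xS.
have uniqA := @reducedA_unique r N r0 r1 x.
have uniqB := @reducedB_unique r N r0 r1 x.
split.
{ case/orP: (lt_total r1) => [r_lt1 | r_gt1].
  - have nd : (nr r < dr r)%N by rewrite -lt1_nr_dr.
    apply: (@extremal_fact r N x true (reducedB r N) (fun z => size z)) => // z fz.
    case: (reducedB_or_exchange r0 fz) => [red | [a [b [z' [rs fz' sz]]]]]; [by left | right].
    have lt : (size z' < size z)%N by apply: exchange_shortens nd sz; case: rs.1.
    by exists z'; split => //; apply: (step_of_exchange (dir := true) rs _ lt); right.
  - have dn : (dr r < nr r)%N by rewrite -gt1_nr_dr.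
    apply: (@extremal_fact r N x true (reducedA r N) (fun z => size z)) => // z fz.
    case: (reducedA_or_exchange r0 fz) => [red | [a [b [z' [rs fz' sz]]]]]; [by left | right].
    have lt : (size z' < size z)%N by apply: exchange_shortens dn sz; case: rs.1.
    by exists z'; split => //; apply: (step_of_exchange (dir := true) rs _ lt); left. }
move=> r_gt1; have dn : (dr r < nr r)%N by rewrite -gt1_nr_dr.
have [z0 f0] := ex0; have x0 := le_trans (ler0n _ _) (fact_size_le r_gt1 f0).
pose B := Num.Def.archi_bound x.
have szB z : is_fact r N x z -> (size z < B)%N.
  move=> fz; rewrite -(ltr_nat rat).
  exact: le_lt_trans (fact_size_le r_gt1 fz) (archi_boundP x0).
apply: (@extremal_fact r N x false (reducedB r N) (fun z => B - size z)%N) => // z fz.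
case: (reducedB_or_exchange r0 fz) => [red | [a [b [z' [rs fz' sz]]]]]; [by left | right].
have lt : (size z < size z')%N by apply: exchange_shortens dn (esym sz); case: rs.1.
exists z'; split => //; last by have := szB _ fz'; lia.
by apply: (step_of_exchange (dir := false) rs _ lt); right.
Qed.
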